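(* Let $\tau$ be a topology on $\mathbb{R}$ such that $\tau_e\subset\tau$ and every nonempty $\tau$-open set has the Baire property and is non-meager (with respect to the Euclidean topology). Then every $\tau$-Świątkowski function $f\colon\mathbb{R}\to\mathbb{R}$ has the Baire property.
   Context: $\tau_e$ is the Euclidean topology on $\mathbb{R}$. For a topology $\tau$ on $\mathbb{R}$ and $f\colon\mathbb{R}\to\mathbb{R}$, $\mathrm{C}_\tau(f)$ is the set of points $x$ at which $f$ is continuous as a map from $(\mathbb{R},\tau)$ to $\mathbb{R}$ with the Euclidean topology. $f$ is a $\tau$-Świątkowski function if for all $a,b\in\mathbb{R}$ with $f(a)<f(b)$ there exists $x\in\mathrm{C}_\tau(f)$ lying strictly between $a$ and $b$ with $f(a)<f(x)<f(b)$. A function has the Baire property if preimages of open sets are of the form $O\triangle M$ with $O$ open and $M$ meager. *)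

From Stdlib Require Import Reals.
Open Scope R_scope.

Definition is_topology (tau : (R -> Prop) -> Prop) : Prop :=
  tau (fun _ => False) /\ tau (fun _ => True) /\
  (forall F : (R -> Prop) -> Prop, (forall U, F U -> tau U) ->
     tau (fun x => exists U, F U /\ U x)) /\
  (forall U V, tau U -> tau V -> tau (fun x => U x /\ V x)).

Definition eopen (U : R -> Prop) : Prop :=
  forall x, U x -> exists eps, 0 < eps /\ forall y, Rabs (y - x) < eps -> U y.

Definition finer_than_euclid (tau : (R -> Prop) -> Prop) : Prop :=
  forall U, eopen U -> tau U.

Definition nonempty (A : R -> Prop) : Prop := exists x, A x.

(* Nowhere dense (Euclidean): the closure has empty interior, i.e. every
   nonempty open set contains a nonempty open subset disjoint from A. *)
Definition nowhere_dense (A : R -> Prop) : Prop :=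
  forall U, eopen U -> nonempty U ->
    exists V, eopen V /\ nonempty V /\ (forall x, V x -> U x) /\
              (forall x, V x -> ~ A x).

Definition meager (A : R -> Prop) : Prop :=
  exists N : nat -> R -> Prop, (forall n, nowhere_dense (N n)) /\
    (forall x, A x -> exists n, N n x).

Definition baire_set (A : R -> Prop) : Prop :=
  exists O M, eopen O /\ meager M /\
    (forall x, A x <-> ((O x /\ ~ M x) \/ (M x /\ ~ O x))).

Definition baire_fun (f : R -> R) : Prop :=
  forall V, eopen V -> baire_set (fun x => V (f x)).

Definition tau_cont_at (tau : (R -> Prop) -> Prop) (f : R -> R) (x : R) : Prop :=
  forall eps, 0 < eps -> exists U, tau U /\ U x /\
    forall y, U y -> Rabs (f y - f x) < eps.

Definition tau_swiatkowski (tau : (R -> Prop) -> Prop) (f : R -> R) : Prop :=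
  forall a b, f a < f b -> exists x,
    tau_cont_at tau f x /\ Rmin a b < x < Rmax a b /\ f a < f x < f b.

(* Let D be the set of points where f is not tau-continuous. For the preimage
   E of a Euclidean open set, the union W of all tau-open sets mapped into it
   is tau-open, hence has the Baire property, and E differs from W only inside
   D. So it suffices that D is meager, i.e. that for each eps the tau-open set
   of points with a tau-neighbourhood of f-oscillation < eps is co-meager.
   That set contains every tau-continuity point, which are Euclidean-dense by
   the Swiatkowski property; and a tau-open, Euclidean-dense set W = O (+) M is
   co-meager because O must meet every nonempty Euclidean open U (otherwise
   the non-meager tau-open set U /\ W would lie inside M). *)

From Stdlib Require Import Reals Lra Classical IndefiniteDescription.
From Stdlib Require Cantor.
Open Scope R_scope.

Lemma meager_sub (A B : R -> Prop) : (forall x, A x -> B x) -> meager B -> meager A.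
Proof. intros HAB [N [HN HB]]. exists N; split; auto. Qed.

Lemma meager_bigcup (A : nat -> R -> Prop) : (forall n, meager (A n)) ->
  meager (fun x => exists n, A n x).
Proof.
  intros HA.
  destruct (functional_choice (fun n (N : nat -> R -> Prop) =>
     (forall m, nowhere_dense (N m)) /\ forall x, A n x -> exists m, N m x) HA)
    as [G HG].
  exists (fun k => G (fst (Cantor.of_nat k)) (snd (Cantor.of_nat k))).
  split.
  - intro k. apply (proj1 (HG _)).
  - intros x [n Hn]. destruct (proj2 (HG n) x Hn) as [m Hm].
    exists (Cantor.to_nat (n, m)). rewrite Cantor.cancel_of_to. exact Hm.
Qed.

Lemma meager_union (A B : R -> Prop) : meager A -> meager B ->
  meager (fun x => A x \/ B x).
Proof.
  intros HA HB.
  apply meager_sub with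
    (fun x => exists n : nat, (match n with O => A | _ => B end) x).
  - intros x [H|H]; [exists O|exists 1%nat]; exact H.
  - apply meager_bigcup. intros [|n]; auto.
Qed.

Lemma nowhere_dense_meager (A : R -> Prop) : nowhere_dense A -> meager A.
Proof. intros H. exists (fun _ => A). split; auto. intros x Hx. exists O; auto. Qed.

Lemma meager0 : meager (fun _ => False).
Proof.
  apply nowhere_dense_meager. intros U HU Hne. exists U. repeat split; auto.
Qed.

Lemma eopen_inter (U V : R -> Prop) :
  eopen U -> eopen V -> eopen (fun x => U x /\ V x).
Proof.
  intros HU HV x [Ux Vx].
  destruct (HU x Ux) as [e1 [He1 H1]], (HV x Vx) as [e2 [He2 H2]].
  exists (Rmin e1 e2). split; [apply Rmin_pos; auto|].
  intros y Hy. split.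
  - apply H1. apply Rlt_le_trans with (1 := Hy); apply Rmin_l.
  - apply H2. apply Rlt_le_trans with (1 := Hy); apply Rmin_r.
Qed.

Lemma eopen_ball (p e : R) : eopen (fun y => Rabs (y - p) < e).
Proof.
  intros x Hx. exists (e - Rabs (x - p)). split; [lra|].
  intros y Hy.
  assert (Rabs (y - p) <= Rabs (y - x) + Rabs (x - p)).
  { replace (y - p) with ((y - x) + (x - p)) by ring. apply Rabs_triang. }
  lra.
Qed.

Lemma nowhere_dense_compl_dense_open (O : R -> Prop) : eopen O ->
  (forall U, eopen U -> nonempty U -> exists x, U x /\ O x) ->
  nowhere_dense (fun x => ~ O x).
Proof.
  intros HO Hdense U HU HUne. exists (fun x => U x /\ O x).
  split; [apply eopen_inter; auto|].
  split; [destruct (Hdense U HU HUne) as [x Hx]; exists x; auto|].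
  split; intros x [Ux Ox]; auto.
Qed.

Lemma baire_set_meager_diff (W E : R -> Prop) : baire_set W ->
  meager (fun x => ~ (W x <-> E x)) -> baire_set E.
Proof.
  intros [O [M [HO [HM HW]]]] HWE.
  exists O, (fun x => ~ (O x <-> E x)). split; [|split]; auto.
  - apply meager_sub with (fun x => M x \/ ~ (W x <-> E x)).
    + intros x Hx. specialize (HW x). tauto.
    + apply meager_union; auto.
  - intro x. tauto.
Qed.

Lemma baire_decomp_meets_nonmeager (W O M T : R -> Prop) :
  (forall x, W x <-> ((O x /\ ~ M x) \/ (M x /\ ~ O x))) -> meager M ->
  (forall x, T x -> W x) -> ~ meager T -> exists x, T x /\ O x.
Proof.
  intros HW HM HTW HT. apply NNPP; intro HnoO.
  apply HT, meager_sub with M; auto.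
  intros x Tx. destruct (proj1 (HW x) (HTW x Tx)) as [[Ox _]|[Mx _]]; auto.
  exfalso; apply HnoO; exists x; auto.
Qed.

Section FinerTopology.

Variable tau : (R -> Prop) -> Prop.
Hypothesis Htop : is_topology tau.
Hypothesis Hfin : finer_than_euclid tau.
Hypothesis Hopen : forall U, tau U -> nonempty U -> baire_set U /\ ~ meager U.

Lemma tau_bigcup (F : (R -> Prop) -> Prop) : (forall U, F U -> tau U) ->
  tau (fun x => exists U, F U /\ U x).
Proof. apply Htop. Qed.

Lemma tau_inter (U V : R -> Prop) : tau U -> tau V -> tau (fun x => U x /\ V x).
Proof. apply Htop. Qed.

Lemma tau_open_baire (U : R -> Prop) : tau U -> baire_set U.
Proof.
  intros HU. destruct (classic (nonempty U)) as [Hne|Hempty].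
  - apply (Hopen U HU Hne).
  - exists (fun _ => False), (fun _ => False).
    split; [intros x []|split; [apply meager0|]].
    intro x. split; [intro Ux; exfalso; apply Hempty; exists x; auto|tauto].
Qed.

Lemma tau_open_dense_compl_meager (W : R -> Prop) : tau W ->
  (forall U, eopen U -> nonempty U -> exists x, U x /\ W x) ->
  meager (fun x => ~ W x).
Proof.
  intros HWt HWdense.
  destruct (tau_open_baire W HWt) as [O [M [HO [HM HW]]]].
  assert (HOdense : forall U, eopen U -> nonempty U -> exists x, U x /\ O x).
  { intros U HU HUne.
    assert (HUW : tau (fun x => U x /\ W x)) by (apply tau_inter; auto).
    destruct (HWdense U HU HUne) as [x Hx].
    destruct (baire_decomp_meets_nonmeager W O M (fun x => U x /\ W x))
      as [y [[Uy _] Oy]]; auto.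
    - intros y [_ Wy]; exact Wy.
    - apply (Hopen _ HUW). exists x; exact Hx.
    - exists y; auto. }
  apply meager_sub with (fun x => ~ O x \/ M x).
  - intros x HnW. specialize (HW x). tauto.
  - apply meager_union; auto.
    apply nowhere_dense_meager, nowhere_dense_compl_dense_open; auto.
Qed.

Variable f : R -> R.

(* Points having a tau-neighbourhood on which f oscillates by less than eps;
   written as a union of tau-open sets so that [tau_bigcup] applies. *)
Definition tau_osc_lt (eps : R) (x : R) : Prop :=
  exists U, (tau U /\ forall y z, U y -> U z -> Rabs (f y - f z) < eps) /\ U x.

Lemma tau_open_osc_lt eps : tau (tau_osc_lt eps).
Proof. apply tau_bigcup. intros U [HU _]; exact HU. Qed.

Lemma tau_cont_osc_lt eps x : 0 < eps -> tau_cont_at tau f x -> tau_osc_lt eps x.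
Proof.
  intros Heps Hx. destruct (Hx (eps / 2)) as [U [HU [Ux HUx]]]; [lra|].
  exists U. split; [split; auto|exact Ux].
  intros y z Uy Uz. specialize (HUx y Uy) as Hy. specialize (HUx z Uz) as Hz.
  replace (f y - f z) with ((f y - f x) - (f z - f x)) by ring.
  eapply Rle_lt_trans; [apply Rabs_triang|]. rewrite Rabs_Ropp. lra.
Qed.

Lemma tau_cont_of_osc_lt x :
  (forall n, tau_osc_lt (/ INR (S n)) x) -> tau_cont_at tau f x.
Proof.
  intros Hosc eps Heps.
  destruct (archimed_cor1 eps Heps) as [[|n] [Hn Hpos]]; [inversion Hpos|].
  destruct (Hosc n) as [U [[HU HUosc] Ux]].
  exists U. split; [exact HU|split; [exact Ux|]].
  intros y Uy. specialize (HUosc y x Uy Ux). lra.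
Qed.

Hypothesis Hf : tau_swiatkowski tau f.

(* If f is constant on a ball, its centre is a tau-continuity point; otherwise
   the Swiatkowski property yields one between two points of the ball. *)
Lemma tau_cont_dense (U : R -> Prop) : eopen U -> nonempty U ->
  exists x, U x /\ tau_cont_at tau f x.
Proof.
  intros HU [p Up]. destruct (HU p Up) as [e [He HeU]].
  destruct (classic (exists y, Rabs (y - p) < e /\ f y <> f p))
    as [[y [Hy Hfy]]|Hconst].
  - assert (Hbetween : forall z, Rmin p y < z < Rmax p y -> U z).
    { intros z Hz. apply HeU. unfold Rmin, Rmax in Hz.
      destruct (Rle_dec p y); apply Rabs_def2 in Hy; apply Rabs_def1; lra. }
    destruct (Rlt_or_le (f p) (f y)) as [Hlt|Hle].
    + destruct (Hf p y Hlt) as [z [Hz [Hb _]]]. exists z; auto.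
    + assert (Hlt : f y < f p) by (destruct Hle; [auto|congruence]).
      destruct (Hf y p Hlt) as [z [Hz [Hb _]]]. exists z. split; auto.
      apply Hbetween. rewrite Rmin_comm, Rmax_comm. exact Hb.
  - exists p. split; [exact Up|]. intros eps Heps.
    exists (fun y => Rabs (y - p) < e).
    split; [apply Hfin, eopen_ball|].
    split; [rewrite Rminus_diag, Rabs_R0; exact He|].
    intros y Hy. destruct (Req_dec (f y) (f p)) as [E|E].
    + rewrite E, Rminus_diag, Rabs_R0; exact Heps.
    + exfalso; apply Hconst; exists y; auto.
Qed.

Lemma tau_discont_meager : meager (fun x => ~ tau_cont_at tau f x).
Proof.
  apply meager_sub with (fun x => exists n, ~ tau_osc_lt (/ INR (S n)) x).
  - intros x Hx. apply NNPP; intro Hall. apply Hx, tau_cont_of_osc_lt.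
    intro n. apply NNPP; intro Hn. apply Hall. exists n; exact Hn.
  - apply meager_bigcup. intro n.
    apply tau_open_dense_compl_meager; [apply tau_open_osc_lt|].
    intros U HU HUne. destruct (tau_cont_dense U HU HUne) as [x [Ux Hx]].
    exists x. split; [exact Ux|]. apply tau_cont_osc_lt; [|exact Hx].
    apply Rinv_0_lt_compat, lt_0_INR, Nat.lt_0_succ.
Qed.

Lemma tau_swiatkowski_baire : baire_fun f.
Proof.
  intros V HV.
  set (W := fun x => exists U, (tau U /\ forall y, U y -> V (f y)) /\ U x).
  apply baire_set_meager_diff with W.
  - apply tau_open_baire, tau_bigcup. intros U [HU _]; exact HU.
  - apply meager_sub with (fun x => ~ tau_cont_at tau f x);
      [|exact tau_discont_meager].
    intros x HWE Hcont. apply HWE. split.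
    + intros [U [[_ HUV] Ux]]. exact (HUV x Ux).
    + intro HVx. destruct (HV (f x) HVx) as [e [He HeV]].
      destruct (Hcont e He) as [U [HU [Ux HUx]]].
      exists U. split; [split; [exact HU|]|exact Ux].
      intros y Uy. apply HeV, HUx, Uy.
Qed.

End FinerTopology.

Theorem mainTheorem10 (tau : (R -> Prop) -> Prop)
  (Htop : is_topology tau)
  (Hfin : finer_than_euclid tau)
  (Hopen : forall U, tau U -> nonempty U -> baire_set U /\ ~ meager U)
  (f : R -> R) (Hf : tau_swiatkowski tau f) :
  baire_fun f.
Proof. exact (tau_swiatkowski_baire tau Htop Hfin Hopen f Hf). Qed.
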